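(* Let $\epsilon>0$, $\delta\ge0$, $n\ge 1$, let $\mathscr X$ be a set, $T:\mathscr X^n\to\mathbb{R}$, and let $\{\mu_X: X\in\mathscr X^n\}$ be probability measures on $\mathbb{R}$, each absolutely continuous with respect to Lebesgue measure. Suppose $\mu_X$ depends on $X$ only through $T(X)$ and that the family has monotone likelihood ratio in $T(X)$. Then $\{\mu_X\}$ satisfies $(\epsilon,\delta)$-differential privacy if and only if for all $X_1,X_2\in\mathscr X^n$ with $\delta(X_1,X_2)=1$ and all $t\in\mathbb{R}$, $$\mu_{X_1}((-\infty,t))\le e^\epsilon\mu_{X_2}((-\infty,t))+\delta\quad\text{and}\quad \mu_{X_1}((t,\infty))\le e^\epsilon\mu_{X_2}((t,\infty))+\delta.$$
   Context: The Hamming distance on $\mathscr X^n$ is $\delta(X,X')=\#\{i:X_i\ne X'_i\}$. The family $\{\mu_X: X\in\mathscr X^n\}$ satisfies $(\epsilon,\delta)$-differential privacy if for every Borel $B\subseteq\mathbb{R}$ and all $X,X'$ with $\delta(X,X')=1$, $\mu_X(B)\le e^\epsilon\mu_{X'}(B)+\delta$. Monotone likelihood ratio in $T(X)$: writing $f_X$ for the Lebesgue density of $\mu_X$, whenever $T(X)>T(X')$ the ratio $f_X(t)/f_{X'}(t)$ is nondecreasing in $t$. *)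

From mathcomp Require Import all_boot all_order all_algebra.
From mathcomp Require Import all_classical all_reals all_analysis.
Set Implicit Arguments. Unset Strict Implicit. Unset Printing Implicit Defensive.
Import Order.TTheory GRing.Theory Num.Theory.
Local Open Scope classical_set_scope.
Local Open Scope ring_scope.

(* Hamming distance on Xs^n (datasets are functions 'I_n -> Xs);
   equality on Xs is decided classically, so Xs is an arbitrary set. *)
Definition hamming (Xs : Type) (n : nat) (X X' : 'I_n -> Xs) : nat :=
  #|[set i : 'I_n | `[< X i <> X' i >]]|%N.

Definition diff_private (R : realType) (Xs : Type) (n : nat)
  (mu : ('I_n -> Xs) -> probability R R) (eps delta : R) : Prop :=
  forall (B : set R), measurable B ->
  forall X X' : 'I_n -> Xs, hamming X X' = 1%N ->
    (mu X B <= (expR eps)%:E * mu X' B + delta%:E)%E.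

Definition is_lebesgue_density (R : realType) (mu : probability R R)
  (f : R -> R) : Prop :=
  (forall t, 0 <= f t) /\ measurable_fun setT f /\
  forall B : set R, measurable B ->
    mu B = (\int[@lebesgue_measure R]_(x in B) (f x)%:E)%E.

(* Monotone likelihood ratio in T: whenever T X > T X', the ratio
   f X t / f X' t is nondecreasing in t, stated in cross-multiplied form
   (standard convention handling zero denominators). *)
Definition mono_likelihood_ratio (R : realType) (Xs : Type) (n : nat)
  (T : ('I_n -> Xs) -> R) (f : ('I_n -> Xs) -> R -> R) : Prop :=
  forall X X' : 'I_n -> Xs, T X' < T X ->
  forall s t : R, s <= t -> f X s * f X' t <= f X t * f X' s.

From mathcomp Require Import all_boot all_order all_algebra.
From mathcomp Require Import all_classical all_reals all_analysis.
From mathcomp Require Import measurable_realfun.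
Set Implicit Arguments.
Unset Strict Implicit.
Unset Printing Implicit Defensive.

Import Order.TTheory GRing.Theory Num.Theory.
Local Open Scope classical_set_scope.
Local Open Scope ring_scope.

(* Write g, h for the densities of mu X, mu X' and c = expR eps.  If U is an
   event with c h <= g on U and g <= c h off U (up to a mu X-null set), then
   for every event B
     mu X B - c mu X' B <= mu X (B `&` U) - c mu X' (B `&` U) <= mu X U - c mu X' U,
   so U is a worst event.  By the monotone likelihood ratio, c h < g at s
   forces c h <= g on one side of s, so such a U is a half-line whose
   endpoint t lies in [-oo, +oo]; the point t is Lebesgue-null, and the tail
   hypotheses at t bound the worst event. *)

Section threshold.
Context {R : realType}.
Implicit Types (u v : R -> R).

Lemma upward_threshold u v :
  (forall s x, s <= x -> u s < v s -> u x <= v x) ->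
  exists t : \bar R,
    (forall x, (x%:E < t)%E -> v x <= u x) /\ (forall x, (t < x%:E)%E -> u x <= v x).
Proof.
move=> uv_up; exists (ereal_inf (EFin @` [set x | u x < v x])); split=> x xt.
  rewrite leNgt; apply/negP => uvx; move: xt; apply/negP; rewrite -leNgt.
  by apply: ereal_inf_lbound; exists x.
have [_ [s uvs <-]] := ereal_inf_lt xt; rewrite lte_fin => /ltW sx.
exact: uv_up sx uvs.
Qed.

Lemma downward_threshold u v :
  (forall s x, s <= x -> u x < v x -> u s <= v s) ->
  exists t : \bar R,
    (forall x, (x%:E < t)%E -> u x <= v x) /\ (forall x, (t < x%:E)%E -> v x <= u x).
Proof.
move=> uv_down; have [|t [below above]] := @upward_threshold (u \o -%R) (v \o -%R).
  by move=> s x /=; rewrite -lerN2; exact: uv_down.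
exists (- t)%E; split=> x xt.
- by have := above (- x); rewrite /= opprK; apply; rewrite EFinN lteNr.
- by have := below (- x); rewrite /= opprK; apply; rewrite EFinN lteNl.
Qed.

End threshold.

Lemma cross_ratio_gt_ge (R : realDomainType) (a b a' b' c : R) :
  0 <= b -> 0 <= a' -> 0 <= b' ->
  a * b' <= a' * b -> c * b < a -> c * b' <= a'.
Proof.
move=> b0 a'0 b'0 cross cba.
have [b_eq0|b_neq0] := eqVneq b 0.
  rewrite b_eq0 mulr0 in cross; rewrite b_eq0 mulr0 in cba.
  have b'_le0 : b' <= 0 by rewrite -(pmulr_rle0 _ cba).
  by rewrite (@le_anti _ _ b' 0) ?b'_le0 ?b'0 // mulr0.
have b_gt0 : 0 < b by rewrite lt_def b_neq0 b0.
rewrite -(ler_pM2r b_gt0) (le_trans _ cross) // mulrAC.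
exact: ler_wpM2r (ltW cba).
Qed.

Lemma density_scale_le (R : realType) (m1 m2 : probability R R) (g h : R -> R)
    (a b : R) (S : set R) :
  is_lebesgue_density m1 g -> is_lebesgue_density m2 h -> 0 <= a -> 0 <= b ->
  measurable S -> (forall x, S x -> a * g x <= b * h x) ->
  (a%:E * m1 S <= b%:E * m2 S)%E.
Proof.
move=> [g0 [mg dg]] [h0 [mh dh]] a0 b0 mS gh; rewrite dg // dh //.
have mS_EFin (f : R -> R) : measurable_fun setT f ->
    measurable_fun S (fun x : R => (f x)%:E).
  by move=> mf; apply/measurable_EFinP; exact: measurable_funS mf.
rewrite -!ge0_integralZl_EFin //; try by [move=> x _; rewrite lee_fin | exact: mS_EFin].
apply: ge0_le_integral => //.
- by move=> x _; rewrite -EFinM lee_fin mulr_ge0.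
- by apply: measurable_funeM; exact: mS_EFin.
- by apply: measurable_funeM; exact: mS_EFin.
Qed.

Section worst_event.
Local Open Scope ereal_scope.
Context {R : realType}.
Variables (m1 m2 : probability R R) (c d : R) (U L : set R).
Hypotheses (mU : measurable U) (mL : measurable L) (c0 : (0 <= c)%R).
Hypothesis m1_rest0 : m1 (~` (U `|` L)) = 0.
Hypothesis UL0 : U `&` L = set0.
Hypothesis m2_le_m1_on_U : forall S, measurable S -> S `<=` U -> c%:E * m2 S <= m1 S.
Hypothesis m1_le_m2_on_L : forall S, measurable S -> S `<=` L -> m1 S <= c%:E * m2 S.

Lemma measure_le_split B : measurable B -> m1 B <= m1 (B `&` U) + m1 (B `&` L).
Proof.
move=> mB; have mUL : measurable (U `|` L) by exact: measurableU.
rewrite (measureDI _ mB mUL) (subset_measure0 _ _ _ m1_rest0) //; last 2 first.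
- exact: measurableD.
- exact: measurableC.
by rewrite add0e setIUr; apply: measureU2; exact: measurableI.
Qed.

Lemma worst_event_bound_setI B : measurable B ->
  m1 U <= c%:E * m2 U + d%:E -> m1 (B `&` U) <= c%:E * m2 (B `&` U) + d%:E.
Proof.
move=> mB tailU; have mUB : measurable (U `\` B) by exact: measurableD.
rewrite setIC -(leeD2lE _ _ (fin_num_measure m1 _ mUB)) -measureDI //.
rewrite (le_trans tailU) // (measureDI m2 mU mB) ge0_muleDr // addeA leeD2r //.
by rewrite leeD2r // m2_le_m1_on_U // => x [].
Qed.

Lemma bound_from_worst_event B : measurable B ->
  m1 U <= c%:E * m2 U + d%:E -> m1 B <= c%:E * m2 B + d%:E.
Proof.
move=> mB tailU; have [mBU mBL] := (measurableI _ _ mB mU, measurableI _ _ mB mL).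
apply: le_trans (measure_le_split mB) _.
have tailBL := m1_le_m2_on_L mBL (@subIsetr _ B L).
apply: le_trans (leeD (worst_event_bound_setI mB tailU) tailBL) _.
rewrite addeAC leeD2r // -ge0_muleDr // -measureU //; last first.
  by rewrite setIACA UL0 setI0.
by rewrite lee_wpmul2l ?lee_fin // le_measure ?inE //; [exact: measurableU | move=> x [] []].
Qed.

End worst_event.

Section extended_half_lines.
Local Open Scope ereal_scope.
Context {R : realType}.
Implicit Types t : \bar R.

Lemma measurable_EFin_gt t : measurable [set x : R | t < x%:E].
Proof.
have := measurable_lte measurableT (measurable_cst t) (@EFin_measurable R setT).
by rewrite setTI.
Qed.

Lemma measurable_EFin_lt t : measurable [set x : R | x%:E < t].
Proof.
have := measurable_lte measurableT (@EFin_measurable R setT) (measurable_cst t).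
by rewrite setTI.
Qed.

Lemma EFin_gt_lt_disj t : [set x : R | t < x%:E] `&` [set x | x%:E < t] = set0.
Proof. by apply/seteqP; split=> // x [/= /lt_trans tx /tx]; rewrite ltxx. Qed.

Lemma EFin_gt_lt_null (m : probability R R) t : m `<< @lebesgue_measure R ->
  m (~` ([set x : R | t < x%:E] `|` [set x | x%:E < t])) = 0.
Proof.
move=> m_ac; have leb_t0 : (@lebesgue_measure R).-null_set [set fine t].
  by apply/measure0_null_setP; [exact: measurable_set1 | exact: lebesgue_measure_set1].
apply: (m_ac _ leb_t0); first by apply: measurableC; apply: measurableU;
  [exact: measurable_EFin_gt | exact: measurable_EFin_lt].
move=> x /= /not_orP[/negP tx /negP xt].
suff -> : t = x%:E by [].
by apply/eqP; rewrite eq_le !leNgt tx xt.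
Qed.

Section tails.
Variables (m1 m2 : probability R R) (c d : R).
Hypotheses (d0 : (0 <= d)%R) (cd1 : (1 <= c + d)%R).

Lemma upper_tail_EFin :
  (forall t : R, m1 [set x | (t < x)%R] <= c%:E * m2 [set x | (t < x)%R] + d%:E) ->
  forall t, m1 [set x | t < x%:E] <= c%:E * m2 [set x | t < x%:E] + d%:E.
Proof.
move=> tail [t| |]; first exact: tail.
- have -> : [set x : R | +oo < x%:E] = set0 by apply/seteqP; split=> x //=; rewrite ltNge leey.
  by rewrite !measure0 mule0 add0e lee_fin.
- have -> : [set x : R | -oo < x%:E] = setT by apply/seteqP; split=> x //= _; exact: ltNyr.
  by rewrite !probability_setT mule1 -EFinD lee_fin.
Qed.

Lemma lower_tail_EFin :
  (forall t : R, m1 [set x | (x < t)%R] <= c%:E * m2 [set x | (x < t)%R] + d%:E) ->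
  forall t, m1 [set x | x%:E < t] <= c%:E * m2 [set x | x%:E < t] + d%:E.
Proof.
move=> tail [t| |]; first exact: tail.
- have -> : [set x : R | x%:E < +oo] = setT by apply/seteqP; split=> x //= _; exact: ltry.
  by rewrite !probability_setT mule1 -EFinD lee_fin.
- have -> : [set x : R | x%:E < -oo] = set0 by apply/seteqP; split=> x //=; rewrite ltNge leNye.
  by rewrite !measure0 mule0 add0e lee_fin.
Qed.

End tails.
End extended_half_lines.

Section privacy_bound.
Context {R : realType}.
Variables (m1 m2 : probability R R) (g h : R -> R) (c d : R).
Hypotheses (dens1 : is_lebesgue_density m1 g) (dens2 : is_lebesgue_density m2 h).
Hypotheses (m1_ac : m1 `<< @lebesgue_measure R).
Hypotheses (c0 : 0 <= c) (d0 : 0 <= d) (cd1 : 1 <= c + d).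

Lemma privacy_bound_of_split (U L : set R) :
  measurable U -> measurable L -> U `&` L = set0 -> m1 (~` (U `|` L)) = 0%E ->
  (forall x, U x -> c * h x <= g x) -> (forall x, L x -> g x <= c * h x) ->
  (m1 U <= c%:E * m2 U + d%:E)%E ->
  forall B, measurable B -> (m1 B <= c%:E * m2 B + d%:E)%E.
Proof.
move=> mU mL UL0 rest0 hgU ghL tailU B mB.
apply: (bound_from_worst_event mU mL c0 rest0 UL0) => // S mS.
- move=> SU; rewrite -[leRHS]mul1e.
  by apply: density_scale_le dens2 dens1 c0 ler01 mS _ => x /SU /hgU; rewrite mul1r.
- move=> SL; rewrite -[leLHS]mul1e.
  by apply: density_scale_le dens1 dens2 ler01 c0 mS _ => x /SL /ghL; rewrite mul1r.
Qed.

Lemma privacy_bound_of_upper_tails :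
  (forall s x, s <= x -> g s * h x <= g x * h s) ->
  (forall t : R, (m1 [set x | (t < x)%R] <= c%:E * m2 [set x | (t < x)%R] + d%:E)%E) ->
  forall B, measurable B -> (m1 B <= c%:E * m2 B + d%:E)%E.
Proof.
move=> mlr tails; have [[g0 _] [h0 _]] := (dens1, dens2).
have [|t [below above]] := @upward_threshold _ (fun x => c * h x) g.
  by move=> s x sx; apply: cross_ratio_gt_ge (mlr s x sx).
apply: (privacy_bound_of_split (measurable_EFin_gt t) (measurable_EFin_lt t)) => //.
- exact: EFin_gt_lt_disj.
- exact: EFin_gt_lt_null.
- exact: upper_tail_EFin.
Qed.

Lemma privacy_bound_of_lower_tails :
  (forall s x, s <= x -> g x * h s <= g s * h x) ->
  (forall t : R, (m1 [set x | (x < t)%R] <= c%:E * m2 [set x | (x < t)%R] + d%:E)%E) ->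
  forall B, measurable B -> (m1 B <= c%:E * m2 B + d%:E)%E.
Proof.
move=> mlr tails; have [[g0 _] [h0 _]] := (dens1, dens2).
have [|t [above below]] := @downward_threshold _ (fun x => c * h x) g.
  by move=> s x sx; apply: cross_ratio_gt_ge (mlr s x sx).
apply: (privacy_bound_of_split (measurable_EFin_lt t) (measurable_EFin_gt t)) => //.
- by rewrite setIC; exact: EFin_gt_lt_disj.
- by rewrite setUC; exact: EFin_gt_lt_null.
- exact: lower_tail_EFin.
Qed.

End privacy_bound.

Theorem lemma6 (R : realType) (eps delta : R) (n : nat) (Xs : Type)
  (T : ('I_n -> Xs) -> R) (mu : ('I_n -> Xs) -> probability R R) :
  0 < eps -> 0 <= delta -> (1 <= n)%N ->
  (forall X, mu X `<< @lebesgue_measure R) ->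
  (forall X1 X2, T X1 = T X2 -> mu X1 = mu X2) ->
  (exists f : ('I_n -> Xs) -> R -> R,
      (forall X, is_lebesgue_density (mu X) (f X)) /\
      mono_likelihood_ratio T f) ->
  diff_private mu eps delta <->
  (forall X1 X2 : 'I_n -> Xs, hamming X1 X2 = 1%N -> forall t : R,
     (mu X1 [set x : R | (x < t)%R] <= (expR eps)%:E * mu X2 [set x : R | (x < t)%R] + delta%:E)%E /\
     (mu X1 [set x : R | (t < x)%R] <= (expR eps)%:E * mu X2 [set x : R | (t < x)%R] + delta%:E)%E).
Proof.
move=> eps_gt0 delta_ge0 _ mu_ac mu_T [f [dens mlr]]; split.
  move=> dp X1 X2 hX t; split; apply: dp hX.
  - exact: (measurable_EFin_lt t%:E).
  - exact: (measurable_EFin_gt t%:E).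
move=> tails B mB X X' hX.
have c_ge1 : 1 <= expR eps by rewrite ltW // expR_gt1.
have cd1 : 1 <= expR eps + delta by rewrite -[1]addr0 lerD.
have c_ge0 : 0 <= expR eps := expR_ge0 eps.
case: (ltgtP (T X) (T X')) => [lt|gt|eq].
- apply: (privacy_bound_of_lower_tails (dens X) (dens X') (mu_ac X)) => //.
    by move=> s x sx; rewrite mulrC [leRHS]mulrC; exact: mlr lt s x sx.
  by move=> t; exact: (tails X X' hX t).1.
- apply: (privacy_bound_of_upper_tails (dens X) (dens X') (mu_ac X)) => //.
    exact: mlr gt.
  by move=> t; exact: (tails X X' hX t).2.
- rewrite (mu_T _ _ eq); apply: le_trans (leeDl _ _) => //.
  exact: lee_pemull.
Qed.
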